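(* The labelled transition system of CPC is structurally image finite: for every CPC process $P$ and every label $\mu$, the set $\{P' : P\xrightarrow{\mu}P'\}$ contains only finitely many equivalence classes with respect to structural congruence $\equiv$.
   Context: Concurrent pattern calculus (CPC). Fix a countable set $\mathcal N$ of names. Patterns are $p ::= \lambda x \mid x \mid \ulcorner x\urcorner \mid p\bullet p$ (binding name, variable name, protected name, compound; $\bullet$ is left associative). ${\sf bn}(p)$, ${\sf vn}(p)$, ${\sf pn}(p)$ denote the sets of names occurring in $p$ as binding, variable and protected names, and ${\sf fn}(p)={\sf vn}(p)\cup{\sf pn}(p)$. A pattern is well formed if its binding names are pairwise distinct and distinct from its free names; all patterns are assumed well formed. A pattern is communicable if it contains no protected and no binding names; protection extends to communicable patterns by $\ulcorner p\bullet q\urcorner=\ulcorner p\urcorner\bullet\ulcorner q\urcorner$. A substitution is a partial function with finite domain from names to communicable patterns. On patterns: $\sigma x=\sigma(x)$ if $x\in{\sf dom}(\sigma)$ else $x$; $\sigma\ulcorner x\urcorner=\ulcorner\sigma(x)\urcorner$ if $x\in{\sf dom}(\sigma)$ else $\ulcorner x\urcorner$; $\sigma(\lambda x)=\lambda x$; $\sigma(p\bullet q)=\sigma p\bullet\sigma q$. Unification $\{p\,\|\,q\}$ is a pair of substitutions or undefined: $\{x\|x\}=\{x\|\ulcorner x\urcorner\}=\{\ulcorner x\urcorner\|x\}=\{\ulcorner x\urcorner\|\ulcorner x\urcorner\}=(\{\},\{\})$; $\{\lambda x\|q\}=(\{q/x\},\{\})$ if $q$ is communicable; $\{p\|\lambda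 x\}=(\{\},\{p/x\})$ if $p$ is communicable; $\{p_1\bullet p_2\|q_1\bullet q_2\}=(\sigma_1\cup\sigma_2,\rho_1\cup\rho_2)$ if $\{p_i\|q_i\}=(\sigma_i,\rho_i)$ for $i=1,2$; undefined otherwise. Processes: $P ::= 0 \mid P|P \mid\ !P \mid (\nu x)P \mid p\to P$ (the binding names of $p$ bind in $P$; ${\sf fn}(p\to P)={\sf fn}(p)\cup({\sf fn}(P)\setminus{\sf bn}(p))$; other free names as usual). Substitution on processes is capture avoiding (up to $\alpha$-conversion). Structural congruence $\equiv$ is the least congruence containing $\alpha$-conversion and $P|0\equiv P$, $P|Q\equiv Q|P$, $P|(Q|R)\equiv(P|Q)|R$, $(\nu n)0\equiv 0$, $(\nu n)(\nu m)P\equiv(\nu m)(\nu n)P$, $!P\equiv P|!P$, $P|(\nu n)Q\equiv(\nu n)(P|Q)$ if $n\notin{\sf fn}(P)$. Labelled transitions: labels $\mu::=\tau\mid(\nu\tilde n)p$. Rules (up to $\alpha$-conversion; parint and parext also have symmetric versions): case: $p\to P\xrightarrow{p}P$; resnon: $P\xrightarrow{\mu}P'$ implies $(\nu n)P\xrightarrow{\mu}(\nu n)P'$ if $n$ does not occur in $\mu$; open: $P\xrightarrow{(\nu\tilde n)p}P'$ implies $(\nu m)P\xrightarrow{(\nu\tilde n,m)p}P'$ if $m\in{\sf vn}(p)\setminus(\tilde n\cup{\sf pn}(p)\cup{\sf bn}(p))$; unify: $P\xrightarrow{(\nu\tilde m)p}P'$ and $Q\xrightarrow{(\nu\tilde n)q}Q'$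 imply $P|Q\xrightarrow{\tau}(\nu\tilde m\tilde n)(\sigma P'|\rho Q')$ if $\{p\|q\}=(\sigma,\rho)$, $\tilde m\cap{\sf fn}(Q)=\tilde n\cap{\sf fn}(P)=\tilde m\cap\tilde n=\emptyset$; parint: $P\xrightarrow{\tau}P'$ implies $P|Q\xrightarrow{\tau}P'|Q$; parext: $P\xrightarrow{(\nu\tilde n)p}P'$ implies $P|Q\xrightarrow{(\nu\tilde n)p}P'|Q$ if $(\tilde n\cup{\sf bn}(p))\cap{\sf fn}(Q)=\emptyset$; rep: $!P|P\xrightarrow{\mu}P'$ implies $!P\xrightarrow{\mu}P'$. *)

From mathcomp Require Import all_boot.
Set Implicit Arguments.
Unset Strict Implicit.
Unset Printing Implicit Defensive.

Definition name := nat.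

(* Patterns p ::= \x | x | 'x' | p . p *)
Inductive pat : Type :=
  | PBind of name
  | PVar of name
  | PProt of name
  | PComp of pat & pat.

Fixpoint bn (p : pat) : seq name :=
  match p with PBind x => [:: x] | PComp a b => bn a ++ bn b | _ => [::] end.
Fixpoint vn (p : pat) : seq name :=
  match p with PVar x => [:: x] | PComp a b => vn a ++ vn b | _ => [::] end.
Fixpoint pn (p : pat) : seq name :=
  match p with PProt x => [:: x] | PComp a b => pn a ++ pn b | _ => [::] end.
Definition fnp (p : pat) : seq name := vn p ++ pn p.
Definition pnames (p : pat) : seq name := bn p ++ fnp p.

Definition wf_pat (p : pat) : bool :=
  uniq (bn p) && all (fun x => x \notin fnp p) (bn p).

Definition communicable (p : pat) : bool := (bn p == [::]) && (pn p == [::]).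

Fixpoint protect (p : pat) : pat :=
  match p with PVar x => PProt x | PComp a b => PComp (protect a) (protect b) | _ => p end.

(* Substitutions: finite partial maps from names to (communicable) patterns,
   represented as association lists (first binding wins). *)
Definition subst := seq (name * pat).

Fixpoint lookup (s : subst) (x : name) : option pat :=
  match s with
  | [::] => None
  | (y, t) :: s' => if x == y then Some t else lookup s' x
  end.

Fixpoint subst_pat (s : subst) (p : pat) : pat :=
  match p with
  | PVar x => if lookup s x is Some t then t else PVar x
  | PProt x => if lookup s x is Some t then protect t else PProt x
  | PBind x => PBind x
  | PComp a b => PComp (subst_pat s a) (subst_pat s b)
  end.

Fixpoint unify (p q : pat) : option (subst * subst) :=
  match p, q with
  | PBind x, _ => if communicable q then Some ([:: (x, q)], [::]) else None
  | _, PBind y => if communicable p then Some ([::], [:: (y, p)]) else None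
  | PComp p1 p2, PComp q1 q2 =>
      match unify p1 q1, unify p2 q2 with
      | Some (s1, r1), Some (s2, r2) => Some (s1 ++ s2, r1 ++ r2)
      | _, _ => None
      end
  | (PVar x | PProt x), (PVar y | PProt y) =>
      if x == y then Some ([::], [::]) else None
  | _, _ => None
  end.

Inductive proc : Type :=
  | Nil
  | Par of proc & proc
  | Rep of proc
  | Res of name & proc
  | Case of pat & proc.

Fixpoint fn (P : proc) : seq name :=
  match P with
  | Nil => [::]
  | Par P Q => fn P ++ fn Q
  | Rep P => fn P
  | Res x P => [seq y <- fn P | y != x]
  | Case p P => fnp p ++ [seq y <- fn P | y \notin bn p]
  end.

Fixpoint bnames (P : proc) : seq name :=
  match P with
  | Nil => [::]
  | Par P Q => bnames P ++ bnames Q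
  | Rep P => bnames P
  | Res x P => x :: bnames P
  | Case p P => bn p ++ bnames P
  end.

Fixpoint wf_proc (P : proc) : bool :=
  match P with
  | Nil => true
  | Par P Q => wf_proc P && wf_proc Q
  | Rep P => wf_proc P
  | Res _ P => wf_proc P
  | Case p P => wf_pat p && wf_proc P
  end.

Definition swap_name (x y n : name) : name :=
  if n == x then y else if n == y then x else n.

Fixpoint swap_pat (x y : name) (p : pat) : pat :=
  match p with
  | PBind n => PBind (swap_name x y n)
  | PVar n => PVar (swap_name x y n)
  | PProt n => PProt (swap_name x y n)
  | PComp a b => PComp (swap_pat x y a) (swap_pat x y b)
  end.

Fixpoint swap_proc (x y : name) (P : proc) : proc :=
  match P with
  | Nil => Nil
  | Par P Q => Par (swap_proc x y P) (swap_proc x y Q)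
  | Rep P => Rep (swap_proc x y P)
  | Res n P => Res (swap_name x y n) (swap_proc x y P)
  | Case p P => Case (swap_pat x y p) (swap_proc x y P)
  end.

Inductive alpha : proc -> proc -> Prop :=
  | a_refl P : alpha P P
  | a_sym P Q : alpha P Q -> alpha Q P
  | a_trans P Q R : alpha P Q -> alpha Q R -> alpha P R
  | a_par P P' Q Q' : alpha P P' -> alpha Q Q' -> alpha (Par P Q) (Par P' Q')
  | a_rep P P' : alpha P P' -> alpha (Rep P) (Rep P')
  | a_res x P P' : alpha P P' -> alpha (Res x P) (Res x P')
  | a_case p P P' : alpha P P' -> alpha (Case p P) (Case p P')
  | a_res_ren x y P : y \notin fn (Res x P) ->
      alpha (Res x P) (Res y (swap_proc x y P))
  | a_case_ren p P x y : x \in bn p -> x \notin fnp p -> y \notin fn (Case p P) ->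
      alpha (Case p P) (Case (swap_pat x y p) (swap_proc x y P)).

Inductive scong : proc -> proc -> Prop :=
  | s_refl P : scong P P
  | s_sym P Q : scong P Q -> scong Q P
  | s_trans P Q R : scong P Q -> scong Q R -> scong P R
  | s_par P P' Q Q' : scong P P' -> scong Q Q' -> scong (Par P Q) (Par P' Q')
  | s_rep P P' : scong P P' -> scong (Rep P) (Rep P')
  | s_res x P P' : scong P P' -> scong (Res x P) (Res x P')
  | s_case p P P' : scong P P' -> scong (Case p P) (Case p P')
  | s_alpha P Q : alpha P Q -> scong P Q
  | s_par0 P : scong (Par P Nil) P
  | s_parC P Q : scong (Par P Q) (Par Q P)
  | s_parA P Q R : scong (Par P (Par Q R)) (Par (Par P Q) R)
  | s_res0 n : scong (Res n Nil) Nil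
  | s_resC n m P : scong (Res n (Res m P)) (Res m (Res n P))
  | s_repU P : scong (Rep P) (Par P (Rep P))
  | s_extr P n Q : n \notin fn P -> scong (Par P (Res n Q)) (Res n (Par P Q)).

(* Naive substitution on processes (bound names are removed from the
   substitution's domain); it is capture avoiding under [safe]. *)
Definition remove_dom (s : subst) (xs : seq name) : subst :=
  [seq e <- s | e.1 \notin xs].

Fixpoint psubst (s : subst) (P : proc) : proc :=
  match P with
  | Nil => Nil
  | Par P Q => Par (psubst s P) (psubst s Q)
  | Rep P => Rep (psubst s P)
  | Res x P => Res x (psubst (remove_dom s [:: x]) P)
  | Case p P => Case (subst_pat s p) (psubst (remove_dom s (bn p)) P)
  end.

Definition safe (s : subst) (P : proc) : bool :=
  all (fun b => all (fun e => b \notin pnames e.2) s) (bnames P).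

Definition disj (a b : seq name) : bool := all (fun x => x \notin b) a.

Definition res_seq (ns : seq name) (P : proc) : proc := foldr Res P ns.

Inductive label : Type :=
  | Tau
  | Out of seq name & pat.

Definition label_names (mu : label) : seq name :=
  match mu with Tau => [::] | Out ns p => ns ++ pnames p end.

(* Capture
   avoiding substitution sigma P' in rule unify is realised as the naive
   substitution on a suitable alpha-variant of P' (choosable via t_alpha). *)
Inductive trans : proc -> label -> proc -> Prop :=
  | t_alpha P P0 mu P1 P2 :
      alpha P P0 -> trans P0 mu P1 -> alpha P1 P2 -> trans P mu P2
  | t_case p P : trans (Case p P) (Out [::] p) P
  | t_resnon n P mu P' :
      trans P mu P' -> n \notin label_names mu -> trans (Res n P) mu (Res n P')
  | t_open m P ns p P' :
      trans P (Out ns p) P' ->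
      m \in vn p -> m \notin ns -> m \notin pn p -> m \notin bn p ->
      trans (Res m P) (Out (rcons ns m) p) P'
  | t_unify P Q ms ns p q P' Q' s r :
      trans P (Out ms p) P' -> trans Q (Out ns q) Q' ->
      unify p q = Some (s, r) ->
      disj ms (fn Q) -> disj ns (fn P) -> disj ms ns ->
      safe s P' -> safe r Q' ->
      trans (Par P Q) Tau (res_seq (ms ++ ns) (Par (psubst s P') (psubst r Q')))
  | t_parint_l P Q P' : trans P Tau P' -> trans (Par P Q) Tau (Par P' Q)
  | t_parint_r P Q Q' : trans Q Tau Q' -> trans (Par P Q) Tau (Par P Q')
  | t_parext_l P Q ns p P' :
      trans P (Out ns p) P' -> disj (ns ++ bn p) (fn Q) ->
      trans (Par P Q) (Out ns p) (Par P' Q)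
  | t_parext_r P Q ns p Q' :
      trans Q (Out ns p) Q' -> disj (ns ++ bn p) (fn P) ->
      trans (Par P Q) (Out ns p) (Par P Q')
  | t_rep P mu P' : trans (Par (Rep P) P) mu P' -> trans (Rep P) mu P'.

(* Image finiteness follows from two bounds on the derivatives of a process P.  First,
   every derivative is structurally congruent to a term whose size is bounded in terms of
   P alone.  This goes by induction on P; a replication !P0 only ever contributes !P0 in
   parallel with a derivative of one copy of P0, or of two copies for a communication, and
   the bound for an output derivative is kept uniform under the substitutions that a later
   communication may apply to it.  Second, the free names of a derivative occur in P or in
   the label.  Up to alpha-conversion, a term of bounded size with bounded free names can
   be written with all its names below a fixed bound, and there are finitely many such
   terms. *)

From HB Require Import structures.
From Pilot Require Import Defs.
From Stdlib Require Import List.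
From mathcomp Require Import all_boot zify.
Set Implicit Arguments.
Unset Strict Implicit.
Unset Printing Implicit Defensive.

Definition pat_comparable : comparable pat.
Proof. by rewrite /comparable /decidable; decide equality; apply: eq_comparable. Qed.
HB.instance Definition _ := comparableMixin pat_comparable.

Definition proc_comparable : comparable proc.
Proof. by rewrite /comparable /decidable; decide equality; apply: eq_comparable. Qed.
HB.instance Definition _ := comparableMixin proc_comparable.

Fixpoint size_pat (p : pat) : nat :=
  match p with PComp a b => (size_pat a + size_pat b).+1 | _ => 1 end.

Fixpoint size_proc (P : proc) : nat :=
  match P with
  | Defs.Nil => 1
  | Par A B => (size_proc A + size_proc B).+1
  | Rep A => (size_proc A).+1
  | Res _ A => (size_proc A).+1
  | Case p A => (size_pat p + size_proc A).+1
  end.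

Fixpoint max_size_pat (P : proc) : nat :=
  match P with
  | Defs.Nil => 0
  | Par A B => maxn (max_size_pat A) (max_size_pat B)
  | Rep A | Res _ A => max_size_pat A
  | Case p A => maxn (size_pat p) (max_size_pat A)
  end.

Fixpoint res_depth (P : proc) : nat :=
  match P with
  | Defs.Nil => 0
  | Par A B => maxn (res_depth A) (res_depth B)
  | Rep A | Case _ A => res_depth A
  | Res _ A => (res_depth A).+1
  end.

Fixpoint shape_pat (p : pat) : pat :=
  match p with
  | PBind _ => PBind 0
  | PVar _ => PVar 0
  | PProt _ => PProt 0
  | PComp a b => PComp (shape_pat a) (shape_pat b)
  end.

Fixpoint shape (P : proc) : proc :=
  match P with
  | Defs.Nil => Defs.Nil
  | Par A B => Par (shape A) (shape B)
  | Rep A => Rep (shape A)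
  | Res _ A => Res 0 (shape A)
  | Case p A => Case (shape_pat p) (shape A)
  end.

Lemma size_shape_pat p : size_pat (shape_pat p) = size_pat p.
Proof. by elim: p => //= a -> b ->. Qed.

Lemma size_proc_shape P : size_proc (shape P) = size_proc P.
Proof. by elim: P => /= [|A -> B ->|A ->|n A ->|p A ->]; rewrite ?size_shape_pat. Qed.

Lemma max_size_pat_shape P : max_size_pat (shape P) = max_size_pat P.
Proof. by elim: P => /= [|A -> B ->|A ->|n A ->|p A ->]; rewrite ?size_shape_pat. Qed.

Lemma res_depth_shape P : res_depth (shape P) = res_depth P.
Proof. by elim: P => /= [|A -> B ->|A ->|n A ->|p A ->]. Qed.

Lemma size_proc_gt0 P : 0 < size_proc P.
Proof. by case: P. Qed.

Lemma size_bn p : size (bn p) <= size_pat p.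
Proof. by elim: p => //= a iha b ihb; rewrite size_cat; lia. Qed.

Notation sw := swap_name.

Lemma swap_nameK x y : involutive (sw x y).
Proof.
move=> n; rewrite /swap_name; case: (eqVneq n x) => [->|nx].
  by rewrite eqxx; case: (eqVneq y x) => [->|]; rewrite ?eqxx.
case: (eqVneq n y) => [->|ny]; first by rewrite eqxx.
by rewrite (negbTE nx) (negbTE ny).
Qed.

Lemma swap_name_inj x y : injective (sw x y).
Proof. exact: inv_inj (swap_nameK x y). Qed.

Lemma swap_name_morph (f : name -> name) x y n : injective f ->
  sw (f x) (f y) (f n) = f (sw x y n).
Proof. by move=> f_inj; rewrite /swap_name !(inj_eq f_inj); case: ifP => //; case: ifP. Qed.

Lemma swap_namel x y : sw x y x = y.
Proof. by rewrite /swap_name eqxx. Qed.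

Lemma swap_name_id x y n : n != x -> n != y -> sw x y n = n.
Proof. by rewrite /swap_name => /negbTE -> /negbTE ->. Qed.

Lemma swap_patK x y : involutive (swap_pat x y).
Proof. by elim=> /= [n|n|n|a -> b ->]; rewrite ?swap_nameK. Qed.

Lemma swap_procK x y : involutive (swap_proc x y).
Proof. by elim=> /= [|A -> B ->|A ->|n A ->|p A ->]; rewrite ?swap_nameK ?swap_patK. Qed.

Lemma bn_swap x y p : bn (swap_pat x y p) = map (sw x y) (bn p).
Proof. by elim: p => //= a -> b ->; rewrite map_cat. Qed.

Lemma vn_swap x y p : vn (swap_pat x y p) = map (sw x y) (vn p).
Proof. by elim: p => //= a -> b ->; rewrite map_cat. Qed.

Lemma pn_swap x y p : pn (swap_pat x y p) = map (sw x y) (pn p).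
Proof. by elim: p => //= a -> b ->; rewrite map_cat. Qed.

Lemma fnp_swap x y p : fnp (swap_pat x y p) = map (sw x y) (fnp p).
Proof. by rewrite /fnp vn_swap pn_swap map_cat. Qed.

Lemma pnames_swap x y p : pnames (swap_pat x y p) = map (sw x y) (pnames p).
Proof. by rewrite /pnames bn_swap fnp_swap map_cat. Qed.

Lemma bnames_swap x y P : bnames (swap_proc x y P) = map (sw x y) (bnames P).
Proof. by elim: P => /= [|A -> B ->|A ->|n A ->|p A ->]; rewrite ?map_cat ?bn_swap. Qed.

Lemma fn_swap x y P : fn (swap_proc x y P) = map (sw x y) (fn P).
Proof.
have mem_sw := mem_map (@swap_name_inj x y).
elim: P => /= [|A -> B ->|A ->|n A ->|p A ->]; rewrite ?map_cat ?filter_map //.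
  by congr map; apply: eq_filter => z /=; rewrite (inj_eq (@swap_name_inj x y)).
rewrite fnp_swap bn_swap /fnp map_cat; do 2 f_equal.
by apply: eq_filter => z /=; rewrite mem_sw.
Qed.

Lemma fn_swap_fresh x y P : x \notin fn P -> y \notin fn P -> fn (swap_proc x y P) = fn P.
Proof.
move=> xP yP; rewrite fn_swap -[RHS]map_id; apply/eq_in_map => z zP.
by apply: swap_name_id; [apply: contraNneq xP|apply: contraNneq yP] => <-.
Qed.

Lemma size_pat_swap x y p : size_pat (swap_pat x y p) = size_pat p.
Proof. by elim: p => //= a -> b ->. Qed.

Lemma shape_pat_swap x y p : shape_pat (swap_pat x y p) = shape_pat p.
Proof. by elim: p => //= a -> b ->. Qed.

Lemma shape_swap x y P : shape (swap_proc x y P) = shape P.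
Proof. by elim: P => /= [|A -> B ->|A ->|n A ->|p A ->]; rewrite ?shape_pat_swap. Qed.

Lemma size_proc_swap x y P : size_proc (swap_proc x y P) = size_proc P.
Proof. by rewrite -size_proc_shape shape_swap size_proc_shape. Qed.

Lemma swap_pat_conj a b x y p :
  swap_pat a b (swap_pat x y p) = swap_pat (sw a b x) (sw a b y) (swap_pat a b p).
Proof. by elim: p => /= [n|n|n|p -> q ->]; rewrite // swap_name_morph //; exact: swap_name_inj. Qed.

Lemma swap_proc_conj a b x y P :
  swap_proc a b (swap_proc x y P) = swap_proc (sw a b x) (sw a b y) (swap_proc a b P).
Proof.
elim: P => /= [|A -> B ->|A ->|n A ->|p A ->] //; last by rewrite swap_pat_conj.
by rewrite swap_name_morph //; exact: swap_name_inj.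
Qed.

Definition perm_name (pi : seq (name * name)) (n : name) : name :=
  foldr (fun e n => sw e.1 e.2 n) n pi.

Definition perm_proc (pi : seq (name * name)) (P : proc) : proc :=
  foldr (fun e P => swap_proc e.1 e.2 P) P pi.

Lemma perm_nameK pi n : perm_name (rev pi) (perm_name pi n) = n.
Proof.
elim: pi n => //= e pi IH n.
by rewrite rev_cons /perm_name foldr_rcons /= swap_nameK; exact: IH.
Qed.

Lemma perm_procK pi P : perm_proc (rev pi) (perm_proc pi P) = P.
Proof.
elim: pi P => //= e pi IH P.
by rewrite rev_cons /perm_proc foldr_rcons /= swap_procK; exact: IH.
Qed.

Lemma perm_name_cat pi1 pi2 n : perm_name (pi1 ++ pi2) n = perm_name pi1 (perm_name pi2 n).
Proof. by rewrite /perm_name foldr_cat. Qed.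

Lemma perm_proc_cat pi1 pi2 P : perm_proc (pi1 ++ pi2) P = perm_proc pi1 (perm_proc pi2 P).
Proof. by rewrite /perm_proc foldr_cat. Qed.

Lemma alpha_fn P Q : alpha P Q -> fn P =i fn Q.
Proof.
elim=> //.
- by move=> P0 Q0 _ IH z; rewrite IH.
- by move=> P0 Q0 R0 _ IH1 _ IH2 z; rewrite IH1 IH2.
- by move=> P0 P' Q0 Q' _ IH1 _ IH2 z; rewrite /= !mem_cat IH1 IH2.
- by move=> x P0 P' _ IH z; rewrite /= !mem_filter IH.
- by move=> p P0 P' _ IH z; rewrite /= !mem_cat !mem_filter IH.
- move=> x y P0 y_fresh.
  have -> : Res y (swap_proc x y P0) = swap_proc x y (Res x P0) by rewrite /= swap_namel.
  rewrite fn_swap_fresh //.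
  by rewrite mem_filter eqxx.
- move=> p P0 x y x_bn x_fnp y_fresh.
  rewrite -[Case (swap_pat _ _ _) _]/(swap_proc x y (Case p P0)) fn_swap_fresh //.
  by rewrite /= mem_cat negb_or x_fnp mem_filter x_bn.
Qed.

Lemma alpha_shape P Q : alpha P Q -> shape P = shape Q.
Proof.
elim=> //=; try congruence.
- by move=> x y P0 _; rewrite shape_swap.
- by move=> p P0 x y _ _ _; rewrite shape_swap shape_pat_swap.
Qed.

Lemma alpha_size_proc P Q : alpha P Q -> size_proc P = size_proc Q.
Proof. by move/alpha_shape=> eP; rewrite -size_proc_shape eP size_proc_shape. Qed.

Lemma alpha_swap a b P Q : alpha P Q -> alpha (swap_proc a b P) (swap_proc a b Q).
Proof.
have mem_sw := mem_map (@swap_name_inj a b).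
elim=> /=.
- by move=> *; apply: a_refl.
- by move=> *; apply: a_sym.
- by move=> P0 Q0 R0 _ IH1 _ IH2; exact: a_trans IH1 IH2.
- by move=> *; apply: a_par.
- by move=> *; apply: a_rep.
- by move=> *; apply: a_res.
- by move=> *; apply: a_case.
- move=> x y P0 y_fresh; rewrite swap_proc_conj; apply: a_res_ren.
  by rewrite -[Res _ _]/(swap_proc a b (Res x P0)) fn_swap mem_sw.
- move=> p P0 x y x_bn x_fnp y_fresh; rewrite swap_proc_conj swap_pat_conj.
  apply: a_case_ren; first by rewrite bn_swap mem_sw.
    by rewrite fnp_swap mem_sw.
  by rewrite -[Case _ _]/(swap_proc a b (Case p P0)) fn_swap mem_sw.
Qed.

Lemma alpha_perm pi P Q : alpha P Q -> alpha (perm_proc pi P) (perm_proc pi Q).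
Proof. by elim: pi => //= e pi IH /IH; apply: alpha_swap. Qed.

Lemma alpha_Par A B A' B' : alpha (Par A B) (Par A' B') -> alpha A A' /\ alpha B B'.
Proof.
move eP: (Par A B) => P; move eQ: (Par A' B') => Q h.
elim: h A B A' B' eP eQ => //.
- by move=> P0 A0 B0 A0' B0' <- [-> ->]; split; apply: a_refl.
- by move=> P0 Q0 _ IH A0 B0 A0' B0' eP eQ; case: (IH _ _ _ _ eQ eP); split; apply: a_sym.
- move=> P0 Q0 R0 h1 IH1 h2 IH2 A0 B0 A0' B0' eP eR.
  move: (alpha_shape h1); rewrite -eP; case: Q0 h1 h2 IH1 IH2 => //= C D _ _ IH1 IH2 _.
  have [aAC aBD] := IH1 _ _ _ _ eP erefl; have [aCA' aDB'] := IH2 _ _ _ _ erefl eR.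
  by split; [exact: a_trans aAC aCA'|exact: a_trans aBD aDB'].
- by move=> P0 P' Q0 Q' h1 _ h2 _ A0 B0 A0' B0' [-> ->] [-> ->].
Qed.

Lemma alpha_ParE A B Q : alpha (Par A B) Q ->
  exists A' B', [/\ Q = Par A' B', alpha A A' & alpha B B'].
Proof.
move=> h; have := alpha_shape h; case: Q h => //= A' B' /alpha_Par[aA aB] _.
by exists A', B'.
Qed.

Lemma alpha_Rep A A' : alpha (Rep A) (Rep A') -> alpha A A'.
Proof.
move eP: (Rep A) => P; move eQ: (Rep A') => Q h.
elim: h A A' eP eQ => //.
- by move=> P0 A0 A0' <- [->]; apply: a_refl.
- by move=> P0 Q0 _ IH A0 A0' eP eQ; apply: a_sym; apply: IH.
- move=> P0 Q0 R0 h1 IH1 h2 IH2 A0 A0' eP eR.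
  move: (alpha_shape h1); rewrite -eP; case: Q0 h1 h2 IH1 IH2 => //= C _ _ IH1 IH2 _.
  by apply: a_trans (IH1 _ _ eP erefl) (IH2 _ _ erefl eR).
- by move=> P0 P' h _ A0 A0' [->] [->].
Qed.

Lemma alpha_RepE A Q : alpha (Rep A) Q -> exists2 A', Q = Rep A' & alpha A A'.
Proof. by move=> h; have := alpha_shape h; case: Q h => //= A' /alpha_Rep; exists A'. Qed.

Lemma alpha_ResE m A Q : alpha (Res m A) Q ->
  exists k A' pi, [/\ Q = Res k A', alpha (perm_proc pi A) A' &
                      {in fn (Res m A), forall z, perm_name pi z = z}].
Proof.
move eP: (Res m A) => P h; elim: h m A eP => //.
- by move=> P0 m A <-; exists m, A, [::]; split=> //; apply: a_refl.
- move=> P0 Q0 h IH m A eQ; subst Q0.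
  have := alpha_shape h; case: P0 h IH => //= k A' h' IH _.
  have [m' [A0 [pi [[em eA] aA0 fix_pi]]]] := IH k A' erefl; subst m' A0.
  exists k, A', (rev pi); split=> //.
  - by move: (alpha_perm (rev pi) aA0); rewrite perm_procK => /a_sym.
  - move=> z zQ; have zP : z \in fn (Res k A') by rewrite (alpha_fn h').
    by rewrite -{1}(fix_pi z zP) perm_nameK.
- move=> P0 Q0 R0 h1 IH1 h2 IH2 m A eP.
  have [k [A1 [pi1 [eQ aA1 fix1]]]] := IH1 m A eP.
  have [k2 [A2 [pi2 [eR aA2 fix2]]]] := IH2 k A1 (esym eQ).
  exists k2, A2, (pi2 ++ pi1); split=> //.
  - by rewrite perm_proc_cat; apply: a_trans aA2; exact: alpha_perm.
  - by move=> z zP; rewrite perm_name_cat fix1 // fix2 // -(alpha_fn h1).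
- by move=> x P0 P' h _ m A [_ ->]; exists x, P', [::].
- move=> x y P0 y_fresh m A [_ ->]; exists y, (swap_proc x y P0), [:: (x, y)].
  split=> //=; [exact: a_refl|move=> z zP].
  apply: swap_name_id; first by move: zP; rewrite mem_filter => /andP[].
  by apply: contraNneq y_fresh => <-.
Qed.

Lemma scong_fn P Q : scong P Q -> fn P =i fn Q.
Proof.
elim=> //.
- by move=> P0 Q0 _ IH z; rewrite IH.
- by move=> P0 Q0 R0 _ IH1 _ IH2 z; rewrite IH1 IH2.
- by move=> P0 P' Q0 Q' _ IH1 _ IH2 z; rewrite /= !mem_cat IH1 IH2.
- by move=> x P0 P' _ IH z; rewrite /= !mem_filter IH.
- by move=> p P0 P' _ IH z; rewrite /= !mem_cat !mem_filter IH.
- by move=> P0 Q0 /alpha_fn.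
- by move=> P0 z; rewrite /= cats0.
- by move=> P0 Q0 z; rewrite /= !mem_cat orbC.
- by move=> P0 Q0 R0 z; rewrite /= !mem_cat orbA.
- by move=> n m P0 z; rewrite /= !mem_filter andbCA.
- by move=> P0 z; rewrite /= mem_cat orbb.
- move=> P0 n Q0 n_fresh z; rewrite /= mem_cat !mem_filter mem_cat.
  by case: (eqVneq z n) => [->|] //=; rewrite (negbTE n_fresh).
Qed.

Lemma scong_swap a b P Q : scong P Q -> scong (swap_proc a b P) (swap_proc a b Q).
Proof.
elim=> /=.
- by move=> *; apply: s_refl.
- by move=> *; apply: s_sym.
- by move=> P0 Q0 R0 _ IH1 _ IH2; exact: s_trans IH1 IH2.
- by move=> *; apply: s_par.
- by move=> *; apply: s_rep.
- by move=> *; apply: s_res.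
- by move=> *; apply: s_case.
- by move=> P0 Q0 /(alpha_swap a b); apply: s_alpha.
- by move=> *; apply: s_par0.
- by move=> *; apply: s_parC.
- by move=> *; apply: s_parA.
- by move=> *; apply: s_res0.
- by move=> *; apply: s_resC.
- by move=> *; apply: s_repU.
- by move=> P0 n Q0 n_fresh; apply: s_extr; rewrite fn_swap (mem_map (@swap_name_inj a b)).
Qed.

Lemma scong_parAC A B C : scong (Par (Par A B) C) (Par (Par A C) B).
Proof.
apply: s_trans (s_sym (s_parA _ _ _)) _.
by apply: s_trans (s_parA _ _ _); apply: s_par; [apply: s_refl|apply: s_parC].
Qed.

Lemma scong_parACA A B C D : scong (Par (Par A B) (Par C D)) (Par (Par A C) (Par B D)).
Proof.
apply: s_trans (s_parA _ _ _) _; apply: s_trans (s_sym (s_parA _ _ _)).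
by apply: s_par; [apply: scong_parAC|apply: s_refl].
Qed.

Lemma scong_par0l A : scong (Par Defs.Nil A) A.
Proof. exact: s_trans (s_parC _ _) (s_par0 _). Qed.

Lemma fn_res_seq ns R z : (z \in fn (res_seq ns R)) = (z \notin ns) && (z \in fn R).
Proof.
elim: ns => //= n ns IH; rewrite mem_filter IH in_cons negb_or.
by case: (z != n); case: (z \in ns).
Qed.

Lemma size_proc_res_seq ns R : size_proc (res_seq ns R) = size ns + size_proc R.
Proof. by elim: ns => //= n ns ->. Qed.

Lemma scong_res_seq ns A B : scong A B -> scong (res_seq ns A) (res_seq ns B).
Proof. by elim: ns => //= n ns IH /IH; apply: s_res. Qed.

Lemma scong_extr_res_seq ns T U : disj ns (fn T) ->
  scong (Par T (res_seq ns U)) (res_seq ns (Par T U)).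
Proof.
elim: ns => /= [_|n ns IH /andP[n_fresh ns_fresh]]; first exact: s_refl.
exact: s_trans (s_extr _ n_fresh) (s_res n (IH ns_fresh)).
Qed.

Lemma disj_sub a b b' : {subset b' <= b} -> disj a b -> disj a b'.
Proof. by move=> sub /allP ha; apply/allP => x /ha; apply: contra; apply: sub. Qed.

Lemma disj_cat a b c : disj (a ++ b) c = disj a c && disj b c.
Proof. by rewrite /disj all_cat. Qed.

Lemma lookup_remove_dom s xs x :
  lookup (remove_dom s xs) x = if x \in xs then None else lookup s x.
Proof.
elim: s => [|[y t] s IH] /=; first by case: ifP.
by case y_xs: (y \in xs) => /=; rewrite IH; case: (eqVneq x y) => [->|]; rewrite ?y_xs.
Qed.

Lemma lookup_restrict (xs : seq name) s x :
  lookup [seq e <- s | e.1 \in xs] x = if x \in xs then lookup s x else None.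
Proof.
elim: s => [|[y t] s IH] /=; first by case: ifP.
by case y_xs: (y \in xs) => /=; rewrite IH; case: (eqVneq x y) => [->|]; rewrite ?y_xs.
Qed.

Lemma lookupNone s x : (lookup s x = None) <-> (x \notin map fst s).
Proof. by elim: s => [|[y t] s IH] //=; rewrite in_cons negb_or; case: ifP. Qed.

Lemma lookup_mem s x t : lookup s x = Some t -> (x, t) \in s.
Proof.
elim: s => [|[y u] s IH] //=; rewrite in_cons.
by case: ifP => [/eqP -> [->]|_ /IH ->]; rewrite ?eqxx ?orbT.
Qed.

Lemma mem_fnp_comp x a b : (x \in fnp (PComp a b)) = (x \in fnp a) || (x \in fnp b).
Proof. by rewrite /fnp /= !mem_cat -!orbA; congr orb; rewrite orbCA. Qed.

Lemma mem_pnames_comp x a b : (x \in pnames (PComp a b)) = (x \in pnames a) || (x \in pnames b).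
Proof.
rewrite /pnames /fnp /= !mem_cat.
by case: (x \in bn a); case: (x \in bn b); case: (x \in vn a); case: (x \in vn b);
  case: (x \in pn a); case: (x \in pn b).
Qed.

Lemma eq_in_subst_pat s s' p : {in fnp p, lookup s =1 lookup s'} ->
  subst_pat s p = subst_pat s' p.
Proof.
elim: p => //= [x|x|a IHa b IHb] eq_ss'; try by rewrite eq_ss' // /fnp inE.
by rewrite IHa ?IHb // => z z_p; apply: eq_ss'; rewrite mem_fnp_comp z_p ?orbT.
Qed.

Lemma eq_in_psubst s s' P : {in fn P, lookup s =1 lookup s'} -> psubst s P = psubst s' P.
Proof.
elim: P s s' => //= [A IHA B IHB|A IHA|n A IHA|p A IHA] s s' eq_ss'.
- by rewrite (IHA s s') ?(IHB s s') // => z zP; apply: eq_ss'; rewrite mem_cat zP ?orbT.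
- by rewrite (IHA s s').
- rewrite (IHA _ (remove_dom s' [:: n])) // => z zA.
  rewrite !lookup_remove_dom mem_seq1; case: eqP => // /eqP z_n.
  by apply: eq_ss'; rewrite mem_filter z_n.
- rewrite (@eq_in_subst_pat s s') => [|z z_p]; last by apply: eq_ss'; rewrite mem_cat z_p.
  rewrite (IHA _ (remove_dom s' (bn p))) // => z zA.
  rewrite !lookup_remove_dom; case: ifP => // z_bn.
  by apply: eq_ss'; rewrite mem_cat mem_filter z_bn zA orbT.
Qed.

Lemma subst_pat_nil p : subst_pat [::] p = p.
Proof. by elim: p => //= a -> b ->. Qed.

Lemma psubst_nil P : psubst [::] P = P.
Proof. by elim: P => //= [A -> B ->|A ->|n A ->|p A ->]; rewrite ?subst_pat_nil. Qed.

Lemma psubst_fresh s P : {in fn P, forall x, x \notin map fst s} -> psubst s P = P.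
Proof.
move=> fresh; rewrite -[RHS](psubst_nil P); apply: eq_in_psubst => x xP /=.
exact/lookupNone/fresh.
Qed.

Lemma psubst_disj s K X : {subset map fst s <= K} -> disj K (fn X) -> psubst s X = X.
Proof.
move=> dom_s /allP fresh; apply: psubst_fresh => z zX.
by apply/negP => /dom_s /fresh; rewrite zX.
Qed.

Definition subst_size (s : subst) : nat := foldr (fun e m => maxn (size_pat e.2) m) 1 s.

Lemma subst_size_gt0 s : 0 < subst_size s.
Proof. by elim: s => //= e s IH; rewrite leq_max IH orbT. Qed.

Lemma size_subst_val s e : e \in s -> size_pat e.2 <= subst_size s.
Proof.
elim: s => //= e' s IH; rewrite in_cons leq_max.
by case/orP=> [/eqP <-|/IH ->]; rewrite ?leqnn ?orbT.
Qed.

Lemma subst_size_sub s1 s2 : {subset s1 <= s2} -> subst_size s1 <= subst_size s2.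
Proof.
elim: s1 => [|e s1 IH] sub /=; first exact: subst_size_gt0.
rewrite geq_max size_subst_val ?IH ?sub ?mem_head // => e' e's1.
by apply: sub; rewrite in_cons e's1 orbT.
Qed.

Lemma size_protect t : size_pat (protect t) = size_pat t.
Proof. by elim: t => //= a -> b ->. Qed.

Lemma size_subst_pat s p : size_pat (subst_pat s p) <= size_pat p * subst_size s.
Proof.
have s_gt0 := subst_size_gt0 s.
elim: p => /= [x|x|x|a IHa b IHb]; rewrite ?mul1n //; last by nia.
  by case e: lookup => [t|] //; apply: size_subst_val (lookup_mem e).
by case e: lookup => [t|] //; rewrite size_protect; apply: size_subst_val (lookup_mem e).
Qed.

Lemma size_psubst s P : size_proc (psubst s P) <= size_proc P * subst_size s.
Proof.
have remove_sub xs s' : {subset remove_dom s' xs <= s'}.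
  by move=> e; rewrite mem_filter => /andP[].
elim: P s => /= [|A IHA B IHB|A IHA|n A IHA|p A IHA] s; have s_gt0 := subst_size_gt0 s.
- nia.
- by have := IHA s; have := IHB s; nia.
- by have := IHA s; nia.
- by have := IHA (remove_dom s [:: n]); have := subst_size_sub (remove_sub [:: n] s); nia.
- have := IHA (remove_dom s (bn p)); have := subst_size_sub (remove_sub (bn p) s).
  by have := size_subst_pat s p; nia.
Qed.

Definition swap_subst a b (s : subst) : subst :=
  map (fun e => (sw a b e.1, swap_pat a b e.2)) s.

Lemma swap_substK a b : involutive (swap_subst a b).
Proof. by elim=> //= [[x t] s IH]; rewrite /= IH swap_nameK swap_patK. Qed.

Lemma dom_swap_subst a b s : map fst (swap_subst a b s) = map (sw a b) (map fst s).
Proof. by rewrite /swap_subst -!map_comp. Qed.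

Lemma lookup_swap a b s x :
  lookup (swap_subst a b s) (sw a b x) = omap (swap_pat a b) (lookup s x).
Proof. by elim: s => [|[y t] s IH] //=; rewrite (inj_eq (@swap_name_inj a b)); case: ifP. Qed.

Lemma swap_protect a b t : swap_pat a b (protect t) = protect (swap_pat a b t).
Proof. by elim: t => //= u -> v ->. Qed.

Lemma swap_subst_pat a b s p :
  swap_pat a b (subst_pat s p) = subst_pat (swap_subst a b s) (swap_pat a b p).
Proof.
elim: p => //= [x|x|u -> v -> //]; rewrite lookup_swap; case: lookup => //= t.
by rewrite swap_protect.
Qed.

Lemma swap_remove_dom a b s xs :
  swap_subst a b (remove_dom s xs) = remove_dom (swap_subst a b s) (map (sw a b) xs).
Proof.
rewrite /remove_dom /swap_subst filter_map; congr map.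
by apply: eq_filter => e /=; rewrite (mem_map (@swap_name_inj a b)).
Qed.

Lemma swap_psubst a b s P :
  swap_proc a b (psubst s P) = psubst (swap_subst a b s) (swap_proc a b P).
Proof.
elim: P s => //= [A IHA B IHB|A IHA|n A IHA|p A IHA] s; rewrite ?IHA ?IHB //.
- by rewrite swap_remove_dom.
- by rewrite swap_subst_pat swap_remove_dom bn_swap.
Qed.

Lemma subst_size_swap a b s : subst_size (swap_subst a b s) = subst_size s.
Proof. by elim: s => //= e s ->; rewrite size_pat_swap. Qed.

Lemma safe_Par s A B : safe s (Par A B) = safe s A && safe s B.
Proof. by rewrite /safe /= all_cat. Qed.

Lemma safe_Res s k A : safe s (Res k A) -> safe s A.
Proof. by rewrite /safe /= => /andP[]. Qed.

Lemma safe_sub s1 s X : {subset s1 <= s} -> safe s X -> safe s1 X.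
Proof.
move=> sub /allP s_safe; apply/allP => b /s_safe /allP b_fresh.
by apply/allP => e /sub; apply: b_fresh.
Qed.

Lemma safe_nil X : safe [::] X.
Proof. exact/allP. Qed.

Lemma safe_swap a b s X : safe (swap_subst a b s) (swap_proc a b X) = safe s X.
Proof.
rewrite /safe bnames_swap all_map; apply: eq_all => x /=.
rewrite /swap_subst all_map; apply: eq_all => e /=.
by rewrite pnames_swap (mem_map (@swap_name_inj a b)).
Qed.

Definition values_within (s : subst) (q : pat) :=
  {in s, forall e, size_pat e.2 <= size_pat q /\ {subset fnp e.2 <= fnp q}}.

Lemma values_within_cat s1 s2 q1 q2 : values_within s1 q1 -> values_within s2 q2 ->
  values_within (s1 ++ s2) (PComp q1 q2).
Proof.
move=> within1 within2 e; rewrite mem_cat => /orP[/within1|/within2] [size_e fnp_e].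
  split=> [|z /fnp_e z_q]; last by rewrite mem_fnp_comp z_q.
  by apply: leq_trans size_e _; rewrite /= ltnW // ltnS leq_addr.
split=> [|z /fnp_e z_q]; last by rewrite mem_fnp_comp z_q orbT.
by apply: leq_trans size_e _; rewrite /= ltnW // ltnS leq_addl.
Qed.

Lemma unify_spec p q s r : unify p q = Some (s, r) ->
  [/\ map fst s = bn p, map fst r = bn q, values_within s q & values_within r p].
Proof.
have within0 t : values_within [::] t by [].
have within1 x t : values_within [:: (x, t)] t.
  by move=> e; rewrite mem_seq1 => /eqP -> /=; split.
elim: p q s r => [x|x|x|p1 IH1 p2 IH2] [y|y|y|q1 q2] s r //=;
  try by case=> <- <-; split=> //; apply: within1.
all: try by case: ifP => // c [<- <-]; split=> //;
  by [apply: within0|apply: within1|case/andP: c => /eqP].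
case e1: (unify p1 q1) => [[s1 r1]|] //; case e2: (unify p2 q2) => [[s2 r2]|] // [<- <-].
have [dom_s1 dom_r1 s1q1 r1p1] := IH1 _ _ _ e1; have [dom_s2 dom_r2 s2q2 r2p2] := IH2 _ _ _ e2.
by split; rewrite ?map_cat ?dom_s1 ?dom_s2 ?dom_r1 ?dom_r2 //; apply: values_within_cat.
Qed.

Lemma subst_size_within s q : values_within s q -> subst_size s <= maxn 1 (size_pat q).
Proof.
elim: s => [|e s IH] within /=; first by rewrite leq_max leqnn.
rewrite geq_max IH => [|e' e's]; last by apply: within; rewrite in_cons e's orbT.
by have [size_e _] := within e (mem_head _ _); rewrite leq_max size_e orbT.
Qed.

Lemma trans_label_fresh R mu R' : trans R mu R' ->
  if mu is Out ns p then disj ns (fn R) else True.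
Proof.
elim=> //.
- move=> P P0 [|ns p] P1 P2 aP _ IH _ //.
  by apply: disj_sub IH => z; rewrite (alpha_fn aP).
- move=> n P [|ns p] P' _ IH _ //.
  by apply: disj_sub IH => z; rewrite mem_filter => /andP[].
- move=> m P ns p P' _ IH _ _ _ _; rewrite /disj all_rcons mem_filter eqxx /=.
  by apply: disj_sub IH => z; rewrite mem_filter => /andP[].
- move=> P Q ns p P' _ IH fresh; apply/allP => z z_ns; rewrite mem_cat negb_or.
  by rewrite (allP IH z z_ns) (allP fresh z) // mem_cat z_ns.
- move=> P Q ns p Q' _ IH fresh; apply/allP => z z_ns; rewrite mem_cat negb_or.
  by rewrite (allP IH z z_ns) (allP fresh z) // mem_cat z_ns.
- move=> P [|ns p] P' _ IH //.
  by apply: disj_sub IH => z /= z_P; rewrite mem_cat z_P.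
Qed.

Lemma trans_label_size R mu R' : trans R mu R' ->
  if mu is Out ns p then size_pat p <= max_size_pat R /\ size ns <= res_depth R else True.
Proof.
elim=> //=.
- move=> P P0 [|ns p] P1 P2 aP _ IH _ //.
  rewrite -max_size_pat_shape -res_depth_shape (alpha_shape aP).
  by rewrite max_size_pat_shape res_depth_shape.
- by move=> p P; rewrite leq_max leqnn.
- by move=> n P [|ns p] P' _ IH _ //; case: IH => ? ?; split; lia.
- by move=> m P ns p P' _ [? ?] *; rewrite size_rcons; split; lia.
- by move=> P Q ns p P' _ [? ?] _; split; lia.
- by move=> P Q ns p Q' _ [? ?] _; split; lia.
- by move=> P [|ns p] P' _ IH //; rewrite /= !maxnn in IH.
Qed.

Lemma trans_label_fn R mu R' : trans R mu R' ->
  if mu is Out ns p then {subset fnp p <= fn R ++ ns} else True.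
Proof.
elim=> //=.
- by move=> P P0 [|ns p] P1 P2 aP _ IH _ // z /IH; rewrite !mem_cat (alpha_fn aP).
- by move=> p P z z_p; rewrite cats0 mem_cat z_p.
- move=> n P [|ns p] P' _ IH n_fresh // z z_p.
  move: (IH z z_p); rewrite !mem_cat => /orP[z_P|->]; last by rewrite orbT.
  rewrite mem_filter z_P andbT; apply/orP; left; apply: contraNneq n_fresh => <-.
  by rewrite /label_names /pnames !mem_cat /fnp -mem_cat z_p !orbT.
- move=> m P ns p P' _ IH _ _ _ _ z /IH; rewrite !mem_cat mem_rcons in_cons mem_filter.
  by case/orP=> ->; case: eqVneq; rewrite ?orbT.
- by move=> P Q ns p P' _ IH _ z /IH; rewrite !mem_cat -!orbA; case/orP=> ->; rewrite ?orbT.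
- by move=> P Q ns p Q' _ IH _ z /IH; rewrite !mem_cat; case/orP=> ->; rewrite ?orbT.
- by move=> P [|ns p] P' _ IH // z /IH; rewrite /= !mem_cat orbb.
Qed.

Lemma fnp_protect t : fnp (protect t) =i fnp t.
Proof.
by elim: t => [x|x|x|a IHa b IHb] z //; rewrite !mem_fnp_comp IHa IHb.
Qed.

Lemma bn_subst_pat s p : {subset bn p <= bn (subst_pat s p)}.
Proof.
elim: p => [x|x|x|a IHa b IHb] //= z; rewrite !mem_cat.
by case/orP=> [/IHa|/IHb] ->; rewrite ?orbT.
Qed.

Lemma fnp_subst_pat s p z : z \in fnp (subst_pat s p) ->
  (z \in fnp p) && (z \notin map fst s) \/ exists2 e, e \in s & z \in fnp e.2.
Proof.
elim: p => [x|x|x|a IHa b IHb] /=.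
- by [].
- case e: lookup => [t|] z_t; first by right; exists (x, t) => //; apply: lookup_mem.
  by left; move: z_t; rewrite /fnp /= mem_seq1 => /eqP ->; rewrite eqxx; apply/lookupNone.
- case e: lookup => [t|] z_t.
    by right; exists (x, t); [apply: lookup_mem|rewrite -fnp_protect].
  by left; move: z_t; rewrite /fnp /= mem_seq1 => /eqP ->; rewrite eqxx; apply/lookupNone.
- rewrite !mem_fnp_comp => /orP[/IHa|/IHb] [/andP[-> ->]|]; rewrite ?orbT; by [left|right].
Qed.

Lemma fn_psubst s P z : z \in fn (psubst s P) ->
  (z \in fn P) && (z \notin map fst s) \/ exists2 e, e \in s & z \in fnp e.2.
Proof.
have dom_remove xs s' x : x \notin xs -> x \in map fst s' -> x \in map fst (remove_dom s' xs).
  by move=> x_xs /mapP[e e_s ex]; rewrite ex map_f // mem_filter -ex x_xs.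
have in_remove xs s' e : e \in remove_dom s' xs -> e \in s' by rewrite mem_filter => /andP[].
elim: P s => [|A IHA B IHB|A IHA|n A IHA|p A IHA] s //=.
- rewrite mem_cat => /orP[/IHA|/IHB] [/andP[z_P z_s]|]; rewrite ?mem_cat ?z_P ?z_s ?orbT;
  by [left|right].
- exact: IHA.
- rewrite mem_filter => /andP[z_n /IHA] [/andP[z_A z_s]|[e /in_remove]]; last by right; exists e.
  by left; rewrite mem_filter z_n z_A; apply: (contraNN _ z_s); apply: dom_remove; rewrite mem_seq1.
- rewrite mem_cat => /orP[/fnp_subst_pat [/andP[z_p z_s]|]|].
  + by left; rewrite z_s andbT -/(fnp p) mem_cat z_p.
  + by right.
  rewrite mem_filter => /andP[z_bn /IHA] [/andP[z_A z_s]|[e /in_remove]]; last by right; exists e.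
  have z_bnp : z \notin bn p by apply: contra z_bn; apply: bn_subst_pat.
  by left; rewrite mem_cat mem_filter z_bnp z_A orbT; apply: (contraNN _ z_s); apply: dom_remove.
Qed.

Lemma fn_psubst_unify P ms p P' s q :
  {subset fn P' <= fn P ++ label_names (Out ms p)} -> {subset fnp p <= fn P ++ ms} ->
  map fst s = bn p -> values_within s q ->
  forall z, z \in fn (psubst s P') -> z \notin ms -> (z \in fn P) || (z \in fnp q).
Proof.
move=> fn_P' fnp_p dom_s within z /fn_psubst[/andP[z_P' z_s]|[e e_s z_e]] z_ms; last first.
  by have [_ /(_ z z_e) ->] := within e e_s; rewrite orbT.
move: (fn_P' z z_P'); rewrite mem_cat => /orP[-> //|].
rewrite /label_names /pnames -dom_s !mem_cat (negbTE z_ms) (negbTE z_s) /= => z_p.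
move: (fnp_p z); rewrite /fnp mem_cat => /(_ z_p).
by rewrite mem_cat (negbTE z_ms) orbF => ->.
Qed.

Lemma trans_fn R mu R' : trans R mu R' -> {subset fn R' <= fn R ++ label_names mu}.
Proof.
elim=> /=.
- move=> P P0 mu0 P1 P2 aP _ IH aP' z; rewrite -(alpha_fn aP') => /IH.
  by rewrite !mem_cat (alpha_fn aP).
- move=> p P z z_P; rewrite /label_names /pnames !mem_cat mem_filter z_P andbT.
  by case: (z \in bn p); rewrite ?orbT.
- move=> n P mu0 P' _ IH _ z; rewrite mem_filter => /andP[z_n /IH].
  by rewrite !mem_cat mem_filter z_n.
- move=> m P ns p P' _ IH _ _ _ _ z /IH; rewrite /label_names !mem_cat mem_rcons in_cons mem_filter.
  by case: eqVneq; rewrite ?orbT //= => _ /orP[->|->]; rewrite ?orbT.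
- move=> P Q ms ns p q P' Q' s r tP IHP tQ IHQ /unify_spec[dom_s dom_r s_q r_p] _ _ _ _ _ z.
  have /= fnp_p := trans_label_fn tP; have /= fnp_q := trans_label_fn tQ.
  rewrite fn_res_seq mem_cat negb_or cats0 => /andP[/andP[z_ms z_ns]].
  rewrite !mem_cat => /orP[z_P'|z_Q'].
  + case/orP: (fn_psubst_unify IHP fnp_p dom_s s_q z_P' z_ms) => [->//|/fnp_q].
    by rewrite mem_cat (negbTE z_ns) orbF => ->; rewrite orbT.
  + case/orP: (fn_psubst_unify IHQ fnp_q dom_r r_p z_Q' z_ns) => [->|/fnp_p]; first by rewrite orbT.
    by rewrite mem_cat (negbTE z_ms) orbF => ->.
- by move=> P Q P' _ IH z; rewrite cats0 !mem_cat => /orP[/IH|->]; rewrite ?cats0 ?orbT // => ->.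
- move=> P Q Q' _ IH z; rewrite cats0 !mem_cat => /orP[->|/IH] //.
  by rewrite cats0 => ->; rewrite orbT.
- move=> P Q ns p P' _ IH _ z; rewrite mem_cat => /orP[/IH|z_Q]; rewrite !mem_cat.
    by case/orP=> ->; rewrite ?orbT.
  by rewrite z_Q orbT.
- move=> P Q ns p Q' _ IH _ z; rewrite mem_cat => /orP[z_P|/IH]; rewrite !mem_cat.
    by rewrite z_P.
  by case/orP=> ->; rewrite ?orbT.
- by move=> P mu0 P' _ IH z /IH; rewrite /= !mem_cat orbb.
Qed.

(** * Derivatives of a replication *)

Section Replication.

Variable P1 : proc.

Inductive copies : proc -> Prop :=
| copies_nil : copies Defs.Nil
| copies_copy L : alpha P1 L -> copies L
| copies_par A B : copies A -> copies B -> copies (Par A B).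

(* The terms reached from [Rep P1] by the rule [rep]; the flag records whether the
   replication itself is still present. *)
Inductive unfolding : bool -> proc -> Prop :=
| unfolding_copy L : alpha P1 L -> unfolding false L
| unfolding_rep L : alpha P1 L -> unfolding true (Rep L)
| unfolding_par b1 b2 A B : unfolding b1 A -> unfolding b2 B -> ~~ (b1 && b2) ->
    unfolding (b1 || b2) (Par A B).

Definition residue (b : bool) (H : proc) : Prop := if b then H = Rep P1 else copies H.

Lemma copies_absorb H : copies H -> scong (Par (Rep P1) H) (Rep P1).
Proof.
elim=> [|L aL|A B _ IHA _ IHB]; first exact: s_par0.
  apply: s_trans (s_par (s_refl _) (s_alpha (a_sym aL))) _.
  exact: s_trans (s_parC _ _) (s_sym (s_repU _)).
exact: s_trans (s_parA _ _ _) (s_trans (s_par IHA (s_refl _)) IHB).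
Qed.

Lemma residue_par b1 b2 H1 H2 : residue b1 H1 -> residue b2 H2 -> ~~ (b1 && b2) ->
  exists2 H, residue (b1 || b2) H & scong (Par H1 H2) H.
Proof.
case: b1; case: b2 => //= r1 r2 _.
- by subst H1; exists (Rep P1); last exact: copies_absorb.
- by subst H2; exists (Rep P1); last exact: s_trans (s_parC _ _) (copies_absorb r1).
- by exists (Par H1 H2); [apply: copies_par|apply: s_refl].
Qed.

Lemma unfolding_residue b T : unfolding b T -> exists2 H, residue b H & scong T H.
Proof.
elim=> [L aL|L aL|b1 b2 A B _ [H1 r1 e1] _ [H2 r2 e2] b12].
- by exists L; [apply: copies_copy|apply: s_refl].
- by exists (Rep P1); last exact/s_rep/s_alpha/a_sym.
- have [H r e] := residue_par r1 r2 b12.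
  by exists H; last exact: s_trans (s_par e1 e2) e.
Qed.

Lemma residue_fn b H : residue b H -> {subset fn H <= fn P1}.
Proof.
case: b => /= [-> //|]; elim=> [|L aL|A B _ IHA _ IHB] z //=; first by rewrite (alpha_fn aL).
by rewrite mem_cat => /orP[/IHA|/IHB].
Qed.

Lemma unfolding_fn b T : unfolding b T -> {subset fn P1 <= fn T}.
Proof.
elim=> [L aL|L aL|b1 b2 A B _ IHA _ _ _] z zP /=; rewrite -?(alpha_fn aL) //.
by rewrite mem_cat IHA.
Qed.

Lemma unfolding_alpha b T T' : unfolding b T -> alpha T T' -> unfolding b T'.
Proof.
move=> uT; elim: uT T' => [L aL|L aL|b1 b2 A B _ IHA _ IHB b12] T' aT.
- exact/unfolding_copy/(a_trans aL).
- by have [L' -> aL'] := alpha_RepE aT; apply/unfolding_rep/(a_trans aL).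
- by have [A' [B' [-> aA aB]]] := alpha_ParE aT; apply: unfolding_par; [apply: IHA|apply: IHB|].
Qed.

Lemma unfoldingE b R : unfolding b R ->
  [\/ b = false /\ alpha P1 R,
      exists2 L, b = true /\ R = Rep L & alpha P1 L |
      exists b1 b2 A B, [/\ b = b1 || b2, R = Par A B, unfolding b1 A, unfolding b2 B
                          & ~~ (b1 && b2)]].
Proof.
by case=> [L aL|L aL|b1 b2 A B uA uB b12]; [apply: Or31|apply: Or32; exists L|
  apply: Or33; exists b1, b2, A, B].
Qed.

Definition pair_tau_derivative (Y : proc) : Prop :=
  exists2 R0, shape R0 = shape P1 \/ shape R0 = shape (Par P1 P1) & trans R0 Tau Y.

(* A derivative of an unfolding is, up to the residue, an output derivative of a single
   copy of [P1] (uniformly in the substitutions a later communication may apply), or a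
   silent derivative of one copy or of two copies in parallel. *)
Definition rep_derivative (b : bool) (mu : label) (R' : proc) : Prop :=
  if mu is Out ms p then
    exists L L', [/\ alpha P1 L, trans L (Out ms p) L' &
      forall s, {subset map fst s <= bn p} -> forall X, alpha R' X -> safe s X ->
        exists X1 H, [/\ alpha L' X1, safe s X1, residue b H &
                        scong (psubst s X) (Par H (psubst s X1))]]
  else exists H Y, [/\ residue b H, pair_tau_derivative Y & scong R' (Par H Y)].

Lemma rep_derivative_copy L mu R' : alpha P1 L -> trans L mu R' -> rep_derivative false mu R'.
Proof.
case: mu => [|ms p] aL tL /=.
- exists Defs.Nil, R'; split; [exact: copies_nil| |exact/s_sym/scong_par0l].
  by exists L => //; left; apply/esym/alpha_shape.
- exists L, R'; split=> // s _ X aX safeX.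
  by exists X, Defs.Nil; split=> //; [exact: copies_nil|exact/s_sym/scong_par0l].
Qed.

Lemma rep_derivative_alpha b mu R1 R2 :
  alpha R1 R2 -> rep_derivative b mu R1 -> rep_derivative b mu R2.
Proof.
case: mu => [|ms p] a12 /=.
- case=> [H [Y [rH tY eR1]]]; exists H, Y; split=> //.
  exact: s_trans (s_alpha (a_sym a12)) eR1.
- case=> [L [L' [aL tL inst]]]; exists L, L'; split=> // s dom_s X aX.
  exact: inst (a_trans a12 aX).
Qed.

Lemma rep_derivative_unify b1 b2 A B ms ns p q A' B' s r :
  unfolding b1 A -> unfolding b2 B -> ~~ (b1 && b2) ->
  trans A (Out ms p) A' -> trans B (Out ns q) B' ->
  rep_derivative b1 (Out ms p) A' -> rep_derivative b2 (Out ns q) B' ->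
  unify p q = Some (s, r) -> disj ms (fn B) -> disj ns (fn A) -> disj ms ns ->
  safe s A' -> safe r B' ->
  rep_derivative (b1 || b2) Tau (res_seq (ms ++ ns) (Par (psubst s A') (psubst r B'))).
Proof.
move=> uA uB b12 tA tB [LA [LA' [aA tLA instA]]] [LB [LB' [aB tLB instB]]] pq.
move=> ms_B ns_A ms_ns sA' rB'.
have [dom_s dom_r _ _] := unify_spec pq.
have s_bn : {subset map fst s <= bn p} by rewrite dom_s.
have r_bn : {subset map fst r <= bn q} by rewrite dom_r.
have [X1 [HA [aX1 sX1 rA eA]]] := instA s s_bn A' (a_refl _) sA'.
have [X2 [HB [aX2 rX2 rB eB]]] := instB r r_bn B' (a_refl _) rB'.
have [H rH eH] := residue_par rA rB b12.
exists H, (res_seq (ms ++ ns) (Par (psubst s X1) (psubst r X2))); split=> //.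
  exists (Par LA LB); first by right; rewrite /= -(alpha_shape aA) -(alpha_shape aB).
  apply: t_unify pq _ _ ms_ns sX1 rX2.
  - exact: t_alpha (a_refl _) tLA aX1.
  - exact: t_alpha (a_refl _) tLB aX2.
  - by apply: disj_sub ms_B => z; rewrite -(alpha_fn aB) => /(unfolding_fn uB).
  - by apply: disj_sub ns_A => z; rewrite -(alpha_fn aA) => /(unfolding_fn uA).
have H12_fresh : disj (ms ++ ns) (fn (Par HA HB)).
  have /= ms_A := trans_label_fresh tA; have /= ns_B := trans_label_fresh tB.
  rewrite disj_cat; apply/andP; split; [apply: disj_sub ms_A|apply: disj_sub ns_B] => z;
  rewrite mem_cat => /orP[/(residue_fn rA)|/(residue_fn rB)];
  by [apply: (unfolding_fn uA)|apply: (unfolding_fn uB)].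
apply: s_trans (scong_res_seq _ (s_par eA eB)) _.
apply: s_trans (scong_res_seq _ (scong_parACA _ _ _ _)) _.
apply: s_trans (s_sym (scong_extr_res_seq _ H12_fresh)) _.
exact: s_par eH (s_refl _).
Qed.

Lemma rep_derivative_parint_l b1 b2 A' B : unfolding b2 B -> ~~ (b1 && b2) ->
  rep_derivative b1 Tau A' -> rep_derivative (b1 || b2) Tau (Par A' B).
Proof.
move=> uB b12 [HA [Y [rA tY eA]]]; have [HB rB eB] := unfolding_residue uB.
have [H rH eH] := residue_par rA rB b12.
exists H, Y; split=> //; apply: s_trans (s_par eA eB) _.
exact: s_trans (scong_parAC _ _ _) (s_par eH (s_refl _)).
Qed.

Lemma rep_derivative_parint_r b1 b2 A B' : unfolding b1 A -> ~~ (b1 && b2) ->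
  rep_derivative b2 Tau B' -> rep_derivative (b1 || b2) Tau (Par A B').
Proof.
move=> uA b12 [HB [Y [rB tY eB]]]; have [HA rA eA] := unfolding_residue uA.
have [H rH eH] := residue_par rA rB b12.
exists H, Y; split=> //; apply: s_trans (s_par eA eB) _.
exact: s_trans (s_parA _ _ _) (s_par eH (s_refl _)).
Qed.

Lemma rep_derivative_parext_l b1 b2 ns p A' B : unfolding b2 B -> ~~ (b1 && b2) ->
  disj (ns ++ bn p) (fn B) -> rep_derivative b1 (Out ns p) A' ->
  rep_derivative (b1 || b2) (Out ns p) (Par A' B).
Proof.
move=> uB b12; rewrite disj_cat => /andP[_ bn_B] [L [L' [aL tL instA]]].
exists L, L'; split=> // s dom_s X aX; have [XA [XB [-> aA aB]]] := alpha_ParE aX.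
rewrite safe_Par => /andP[sXA sXB]; have [X1 [HA [aX1 sX1 rA eA]]] := instA s dom_s XA aA sXA.
have [HB rB eB] := unfolding_residue (unfolding_alpha uB aB).
have [H rH eH] := residue_par rA rB b12.
exists X1, H; split=> //=; rewrite (psubst_disj dom_s (X := XB)); last first.
  by apply: disj_sub bn_B => z; rewrite (alpha_fn aB).
apply: s_trans (s_par eA eB) _.
exact: s_trans (scong_parAC _ _ _) (s_par eH (s_refl _)).
Qed.

Lemma rep_derivative_parext_r b1 b2 ns p A B' : unfolding b1 A -> ~~ (b1 && b2) ->
  disj (ns ++ bn p) (fn A) -> rep_derivative b2 (Out ns p) B' ->
  rep_derivative (b1 || b2) (Out ns p) (Par A B').
Proof.
move=> uA b12; rewrite disj_cat => /andP[_ bn_A] [L [L' [aL tL instB]]].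
exists L, L'; split=> // s dom_s X aX; have [XA [XB [-> aA aB]]] := alpha_ParE aX.
rewrite safe_Par => /andP[sXA sXB]; have [X1 [HB [aX1 sX1 rB eB]]] := instB s dom_s XB aB sXB.
have [HA rA eA] := unfolding_residue (unfolding_alpha uA aA).
have [H rH eH] := residue_par rA rB b12.
exists X1, H; split=> //=; rewrite (psubst_disj dom_s (X := XA)); last first.
  by apply: disj_sub bn_A => z; rewrite (alpha_fn aA).
apply: s_trans (s_par eA eB) _.
exact: s_trans (s_parA _ _ _) (s_par eH (s_refl _)).
Qed.

Lemma unfolding_trans b R mu R' : unfolding b R -> trans R mu R' -> rep_derivative b mu R'.
Proof.
move=> uR tR; elim: tR (tR) b uR => {R mu R'}.
- move=> R R0 mu R1 R2 aR t0 IH aR' _ b uR.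
  exact: rep_derivative_alpha aR' (IH t0 b (unfolding_alpha uR aR)).
- move=> p A t b /unfoldingE[[-> aL]|[L [_ eR]]|[b1 [b2 [A0 [B0 [_ eR _ _ _]]]]]] //.
  exact: rep_derivative_copy aL t.
- move=> n A mu A' _ _ _ t b /unfoldingE[[-> aL]|[L [_ eR]]|[b1 [b2 [A0 [B0 [_ eR _ _ _]]]]]] //.
  exact: rep_derivative_copy aL t.
- move=> m A ns p A' _ _ _ _ _ _ t b.
  case/unfoldingE=> [[-> aL]|[L [_ eR]]|[b1 [b2 [A0 [B0 [_ eR _ _ _]]]]]] //.
  exact: rep_derivative_copy aL t.
- move=> A B ms ns p q A' B' s r tA IHA tB IHB pq ms_B ns_A ms_ns sA' rB' t b.
  case/unfoldingE=> [[-> aL]|[L [_ eR]]|[b1 [b2 [A0 [B0 [-> [<- <-] uA uB b12]]]]]] //.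
    exact: rep_derivative_copy aL t.
  by apply: rep_derivative_unify uA uB b12 tA tB (IHA tA _ uA) (IHB tB _ uB) pq
    ms_B ns_A ms_ns sA' rB'.
- move=> A B A' tA IHA t b.
  case/unfoldingE=> [[-> aL]|[L [_ eR]]|[b1 [b2 [A0 [B0 [-> [<- <-] uA uB b12]]]]]] //.
    exact: rep_derivative_copy aL t.
  exact: rep_derivative_parint_l uB b12 (IHA tA _ uA).
- move=> A B B' tB IHB t b.
  case/unfoldingE=> [[-> aL]|[L [_ eR]]|[b1 [b2 [A0 [B0 [-> [<- <-] uA uB b12]]]]]] //.
    exact: rep_derivative_copy aL t.
  exact: rep_derivative_parint_r uA b12 (IHB tB _ uB).
- move=> A B ns p A' tA IHA fresh t b.
  case/unfoldingE=> [[-> aL]|[L [_ eR]]|[b1 [b2 [A0 [B0 [-> [<- <-] uA uB b12]]]]]] //.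
    exact: rep_derivative_copy aL t.
  exact: rep_derivative_parext_l uB b12 fresh (IHA tA _ uA).
- move=> A B ns p B' tB IHB fresh t b.
  case/unfoldingE=> [[-> aL]|[L [_ eR]]|[b1 [b2 [A0 [B0 [-> [<- <-] uA uB b12]]]]]] //.
    exact: rep_derivative_copy aL t.
  exact: rep_derivative_parext_r uA b12 fresh (IHB tB _ uB).
- move=> A mu A' tA IHA t b.
  case/unfoldingE=> [[-> aL]|[L [-> [eL]] aL]|[b1 [b2 [A0 [B0 [_ eR _ _ _]]]]]] //.
    exact: rep_derivative_copy aL t.
  subst L; apply: (IHA tA (true || false)).
  by apply: unfolding_par; [apply: unfolding_rep|apply: unfolding_copy|].
Qed.

End Replication.

(** * Size bounds on derivatives *)

(* An output derivative is later instantiated by the substitution of a communication, so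
   its bound has to survive every admissible substitution; [X] ranges over alpha-variants
   since [psubst] only avoids capture on terms that are [safe]. *)
Definition bounded_instances (B : nat) (K : seq name) (R : proc) : Prop :=
  forall s, {subset map fst s <= K} -> forall X, alpha R X -> safe s X ->
    exists2 Q, scong (psubst s X) Q & size_proc Q <= B * subst_size s.

Definition bounded_derivative (B : nat) (mu : label) (R : proc) : Prop :=
  if mu is Out _ p then bounded_instances B (bn p) R
  else exists2 Q, scong R Q & size_proc Q <= B.

Lemma bounded_instances_alpha B K R1 R2 :
  alpha R1 R2 -> bounded_instances B K R1 -> bounded_instances B K R2.
Proof. by move=> a12 bounded s dom_s X a2X; apply: bounded => //; apply: a_trans a2X. Qed.

Lemma bounded_derivative_alpha B mu R1 R2 :
  alpha R1 R2 -> bounded_derivative B mu R1 -> bounded_derivative B mu R2.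
Proof.
case: mu => [|ns p] /= a12; last exact: bounded_instances_alpha.
by case=> Q R1Q sizeQ; exists Q => //; apply: s_trans R1Q; apply/s_alpha/a_sym.
Qed.

Lemma bounded_derivative_scong B mu R :
  bounded_derivative B mu R -> exists2 Q, scong R Q & size_proc Q <= B.
Proof.
case: mu => [|ns p] //= bounded.
have nil_bn : {subset map fst ([::] : subst) <= bn p} by [].
by have := bounded [::] nil_bn R (a_refl _) (safe_nil _); rewrite psubst_nil muln1.
Qed.

Lemma bounded_instances_mono B B' K R :
  B <= B' -> bounded_instances B K R -> bounded_instances B' K R.
Proof.
move=> leBB' bounded s dom_s X aX safeX; have [Q sQ sizeQ] := bounded s dom_s X aX safeX.
by exists Q => //; apply: leq_trans sizeQ _; rewrite leq_mul2r leBB' orbT.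
Qed.

Lemma bounded_instances_swap a b B K R :
  bounded_instances B K R -> bounded_instances B (map (sw a b) K) (swap_proc a b R).
Proof.
move=> bounded s dom_s X aX safeX.
have dom_s' : {subset map fst (swap_subst a b s) <= K}.
  by move=> x; rewrite dom_swap_subst => /mapP[y /dom_s /mapP[z zK ->] ->]; rewrite swap_nameK.
have aX' : alpha R (swap_proc a b X) by have := alpha_swap a b aX; rewrite swap_procK.
have [Q sQ sizeQ] := bounded _ dom_s' _ aX' (etrans (safe_swap a b s X) safeX).
exists (swap_proc a b Q); last by rewrite size_proc_swap; rewrite subst_size_swap in sizeQ.
by have := scong_swap a b sQ; rewrite swap_psubst swap_substK swap_procK.
Qed.

Lemma bounded_instances_perm pi B K R :
  bounded_instances B K R -> bounded_instances B (map (perm_name pi) K) (perm_proc pi R).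
Proof.
elim: pi => [|e pi IH] bounded /=; first by rewrite map_id.
by have := bounded_instances_swap (a := e.1) (b := e.2) (IH bounded); rewrite -map_comp.
Qed.

(* Only the part of [s] acting on the free names of the body matters, and the renaming
   of the bound name is absorbed by [bounded_instances_perm]. *)
Lemma bounded_instances_Res B K m A :
  bounded_instances B K A -> bounded_instances B.+1 K (Res m A).
Proof.
move=> bounded s dom_s X aX safeX.
have [k [A' [pi [eX aA' fix_pi]]]] := alpha_ResE aX; subst X => /=.
set s1 := [seq e <- remove_dom s [:: k] | e.1 \in fn A'].
have s1_s : {subset s1 <= s} by move=> e; rewrite !mem_filter => /and3P[].
have -> : psubst (remove_dom s [:: k]) A' = psubst s1 A'.
  by apply: eq_in_psubst => x xA'; rewrite lookup_restrict xA'.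
have dom_s1 : {subset map fst s1 <= map (perm_name pi) K}.
  move=> x /mapP[e]; rewrite !mem_filter mem_seq1 => /and3P[e_A' e_k e_s] ->.
  have e_fn : e.1 \in fn (Res m A) by rewrite (alpha_fn aX) /= mem_filter e_k.
  by rewrite -(fix_pi _ e_fn); apply/map_f/dom_s/map_f.
have [Q sQ sizeQ] := bounded_instances_perm bounded dom_s1 aA' (safe_sub s1_s (safe_Res safeX)).
exists (Res k Q); first exact: s_res.
by have := subst_size_sub s1_s; have := subst_size_gt0 s; rewrite /=; nia.
Qed.

(* Quantifying over every term of the shape of [P] makes the bound insensitive to the
   alpha-conversions built into [trans]. *)
Definition derivatives_bounded (P : proc) (B : nat) : Prop :=
  forall R, shape R = shape P -> forall mu R', trans R mu R' -> bounded_derivative B mu R'.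

Lemma size_proc_eq_shape R P : shape R = shape P -> size_proc R = size_proc P.
Proof. by move=> eRP; rewrite -size_proc_shape eRP size_proc_shape. Qed.

Lemma derivatives_bounded_Nil : derivatives_bounded Defs.Nil 0.
Proof.
move=> R eR mu R' t; elim: t eR => // R0 R1 mu0 R2 R3 a01 _ IH a23 e0.
by apply: bounded_derivative_alpha a23 (IH _); rewrite -(alpha_shape a01).
Qed.

Lemma derivatives_bounded_Case p A : derivatives_bounded (Case p A) (size_proc A).
Proof.
move=> R eR mu R' t; elim: t eR => //.
- move=> R0 R1 mu0 R2 R3 a01 _ IH a23 e0.
  by apply: bounded_derivative_alpha a23 (IH _); rewrite -(alpha_shape a01).
- move=> q A0 [_ eA] s _ X aX _; exists (psubst s X); first exact: s_refl.
  apply: leq_trans (size_psubst s X) _.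
  by rewrite -(alpha_size_proc aX) (size_proc_eq_shape eA).
Qed.

Lemma derivatives_bounded_Res n A B : derivatives_bounded A B -> derivatives_bounded (Res n A) B.+1.
Proof.
move=> bounded R eR mu R' t; elim: t eR => //.
- move=> R0 R1 mu0 R2 R3 a01 _ IH a23 e0.
  by apply: bounded_derivative_alpha a23 (IH _); rewrite -(alpha_shape a01).
- move=> m A0 [|ns p] A0' t _ _ [eA]; have /= := bounded _ eA _ _ t.
    by case=> Q eQ sizeQ; exists (Res m Q); [apply: s_res|rewrite /=; lia].
  exact: bounded_instances_Res.
- move=> m A0 ns p A0' t _ _ _ _ _ [eA].
  exact: bounded_instances_mono (bounded _ eA _ _ t).
Qed.

Lemma bounded_unify A B P0 P1 B0 B1 ms ns p q A' B' s r :
  shape A = shape P0 -> shape B = shape P1 ->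
  trans A (Out ms p) A' -> trans B (Out ns q) B' ->
  bounded_instances B0 (bn p) A' -> bounded_instances B1 (bn q) B' ->
  unify p q = Some (s, r) -> safe s A' -> safe r B' ->
  exists2 Q, scong (res_seq (ms ++ ns) (Par (psubst s A') (psubst r B'))) Q &
    size_proc Q <= (res_depth P0 + res_depth P1).+1 +
                   B0 * maxn 1 (max_size_pat P1) + B1 * maxn 1 (max_size_pat P0).
Proof.
move=> eA eB tA tB boundedA boundedB pq sA' rB'.
have [dom_s dom_r s_q r_p] := unify_spec pq.
have s_bn : {subset map fst s <= bn p} by rewrite dom_s.
have r_bn : {subset map fst r <= bn q} by rewrite dom_r.
have [QA eQA sizeQA] := boundedA s s_bn A' (a_refl _) sA'.
have [QB eQB sizeQB] := boundedB r r_bn B' (a_refl _) rB'.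
exists (res_seq (ms ++ ns) (Par QA QB)); first exact/scong_res_seq/s_par.
have /= [p_A ms_A] := trans_label_size tA; have /= [q_B ns_B] := trans_label_size tB.
rewrite -max_size_pat_shape -res_depth_shape eA max_size_pat_shape res_depth_shape in p_A ms_A.
rewrite -max_size_pat_shape -res_depth_shape eB max_size_pat_shape res_depth_shape in q_B ns_B.
have s_size : subst_size s <= maxn 1 (max_size_pat P1).
  by apply: leq_trans (subst_size_within s_q) _; rewrite geq_max !leq_max leqnn q_B orbT.
have r_size : subst_size r <= maxn 1 (max_size_pat P0).
  by apply: leq_trans (subst_size_within r_p) _; rewrite geq_max !leq_max leqnn p_A orbT.
have := leq_mul (leqnn B0) s_size; have := leq_mul (leqnn B1) r_size.
by rewrite size_proc_res_seq size_cat /=; lia.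
Qed.

Lemma derivatives_bounded_Par P0 P1 B0 B1 :
  derivatives_bounded P0 B0 -> derivatives_bounded P1 B1 ->
  derivatives_bounded (Par P0 P1)
    ((B0 + B1 + size_proc P0 + size_proc P1 + res_depth P0 + res_depth P1).+1
     + B0 * maxn 1 (max_size_pat P1) + B1 * maxn 1 (max_size_pat P0)).
Proof.
move=> bounded0 bounded1 R eR mu R' t; elim: t eR => //.
- move=> R0 R1 mu0 R2 R3 a01 _ IH a23 e0.
  by apply: bounded_derivative_alpha a23 (IH _); rewrite -(alpha_shape a01).
- move=> A B ms ns p q A' B' s r tA _ tB _ pq _ _ _ sA' rB' [eA eB] /=.
  have [Q eQ sizeQ] :=
    bounded_unify eA eB tA tB (bounded0 _ eA _ _ tA) (bounded1 _ eB _ _ tB) pq sA' rB'.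
  by exists Q => //; lia.
- move=> A B A' tA _ [eA eB]; have [Q eQ sizeQ] := bounded0 _ eA _ _ tA.
  exists (Par Q B); first exact: s_par eQ (s_refl _).
  by rewrite /= (size_proc_eq_shape eB); lia.
- move=> A B B' tB _ [eA eB]; have [Q eQ sizeQ] := bounded1 _ eB _ _ tB.
  exists (Par A Q); first exact: s_par (s_refl _) eQ.
  by rewrite /= (size_proc_eq_shape eA); lia.
- move=> A B ns p A' tA _; rewrite disj_cat => /andP[_ bn_B] [eA eB] s dom_s X aX.
  have [XA [XB [-> aA aB]]] := alpha_ParE aX; rewrite safe_Par => /andP[sXA _].
  have [Q eQ sizeQ] := bounded0 _ eA _ _ tA s dom_s XA aA sXA.
  exists (Par Q XB); rewrite /= ?(psubst_disj dom_s (X := XB)).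
  + exact: s_par eQ (s_refl _).
  + by apply: disj_sub bn_B => z; rewrite (alpha_fn aB).
  + by rewrite -(alpha_size_proc aB) (size_proc_eq_shape eB); have := subst_size_gt0 s; nia.
- move=> A B ns p B' tB _; rewrite disj_cat => /andP[_ bn_A] [eA eB] s dom_s X aX.
  have [XA [XB [-> aA aB]]] := alpha_ParE aX; rewrite safe_Par => /andP[_ sXB].
  have [Q eQ sizeQ] := bounded1 _ eB _ _ tB s dom_s XB aB sXB.
  exists (Par XA Q); rewrite /= ?(psubst_disj dom_s (X := XA)).
  + exact: s_par (s_refl _) eQ.
  + by apply: disj_sub bn_A => z; rewrite (alpha_fn aA).
  + by rewrite -(alpha_size_proc aA) (size_proc_eq_shape eA); have := subst_size_gt0 s; nia.
Qed.

(* [P0 | P0] accounts for a communication between two copies of [P0]. *)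
Lemma derivatives_bounded_Rep P0 B0 B2 :
  derivatives_bounded P0 B0 -> derivatives_bounded (Par P0 P0) B2 ->
  derivatives_bounded (Rep P0) (B0 + B2 + size_proc P0).+2.
Proof.
move=> bounded0 bounded2 [] //= A [eA] mu R' t.
have := unfolding_trans (unfolding_rep (a_refl A)) t; case: mu t => [|ms p] t /=.
- case=> [H [Y [-> [R0 eR0 tR0] eY]]].
  have [QY eQY sizeQY] : exists2 Q, scong Y Q & size_proc Q <= B0 + B2.
    case: eR0 => [e|e].
      by have [Q ? ?] := bounded0 _ (etrans e eA) _ _ tR0; exists Q => //; lia.
    have e' : shape R0 = shape (Par P0 P0) by rewrite e /= eA.
    by have [Q ? ?] := bounded2 _ e' _ _ tR0; exists Q => //; lia.
  exists (Par (Rep A) QY); first exact: s_trans eY (s_par (s_refl _) eQY).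
  by rewrite /= (size_proc_eq_shape eA); lia.
- case=> [L [L' [aL tL inst]]] s dom_s X aX safeX.
  have [X1 [H [aX1 sX1 -> eX]]] := inst s dom_s X aX safeX.
  have eL : shape L = shape P0 by rewrite -(alpha_shape aL).
  have [Q eQ sizeQ] := bounded0 _ eL _ _ tL s dom_s X1 aX1 sX1.
  exists (Par (Rep A) Q); first exact: s_trans eX (s_par (s_refl _) eQ).
  by rewrite /= (size_proc_eq_shape eA); have := subst_size_gt0 s; nia.
Qed.

Lemma exists_derivatives_bound P : exists B, derivatives_bounded P B.
Proof.
elim: P => [|A [BA bA] B [BB bB]|A [BA bA]|n A [BA bA]|p A _].
- by exists 0; apply: derivatives_bounded_Nil.
- by eexists; apply: derivatives_bounded_Par bA bB.
- by eexists; apply: derivatives_bounded_Rep bA (derivatives_bounded_Par bA bA).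
- by eexists; apply: derivatives_bounded_Res bA.
- by eexists; apply: derivatives_bounded_Case.
Qed.

(** * Finitely many terms up to alpha-conversion *)

Fixpoint names_below_pat (k : nat) (p : pat) : bool :=
  match p with
  | PBind x | PVar x | PProt x => x < k
  | PComp a b => names_below_pat k a && names_below_pat k b
  end.

Fixpoint names_below (k : nat) (P : proc) : bool :=
  match P with
  | Defs.Nil => true
  | Par A B => names_below k A && names_below k B
  | Rep A => names_below k A
  | Res x A => (x < k) && names_below k A
  | Case p A => names_below_pat k p && names_below k A
  end.

Lemma names_below_pat_mono k k' p : k <= k' -> names_below_pat k p -> names_below_pat k' p.
Proof.
move=> le_kk'; elim: p => [x|x|x|a IHa b IHb] /=; try by move/leq_trans; apply.
by case/andP=> /IHa -> /IHb.
Qed.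

Lemma names_below_mono k k' P : k <= k' -> names_below k P -> names_below k' P.
Proof.
move=> le_kk'; elim: P => /= [//|A IHA B IHB|A IHA|x A IHA|p A IHA].
- by case/andP=> /IHA -> /IHB.
- exact: IHA.
- by case/andP=> x_k /IHA ->; rewrite (leq_trans x_k le_kk').
- by case/andP=> /(names_below_pat_mono le_kk') -> /IHA.
Qed.

Lemma names_below_patP k p : {in pnames p, forall z, z < k} -> names_below_pat k p.
Proof.
elim: p => [x|x|x|a IHa b IHb] /= below; try by apply: below; rewrite /pnames /fnp /= inE.
by rewrite IHa ?IHb // => z z_p; apply: below; rewrite mem_pnames_comp z_p ?orbT.
Qed.

Lemma count_swap (a : pred name) x y l : a x -> ~~ a y -> y \notin l ->
  count a (map (sw x y) l) + count (pred1 x) l = count a l.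
Proof.
move=> ax ay; elim: l => //= z l IH; rewrite in_cons negb_or => /andP[y_z y_l].
rewrite -IH //; case: (eqVneq z x) => [->|z_x]; first by rewrite swap_namel (negbTE ay) ax /=; lia.
by rewrite swap_name_id 1?eq_sym //=; lia.
Qed.

(* The binding names of [p] can be moved below [M + size_pat p], since [p] has fewer
   binding names than that interval has elements; [n] bounds the number of names that
   still have to move. *)
Lemma alpha_Case_canon n M p A :
  count (fun z => M + size_pat p <= z) (bn p) <= n -> {in fn (Case p A), forall z, z < M} ->
  exists p' A', [/\ alpha (Case p A) (Case p' A'), size_pat p' = size_pat p,
                   size_proc A' = size_proc A & all (fun z => z < M + size_pat p) (bn p')].
Proof.
elim: n p A => [|n IH] p A count_p below.
  exists p, A; split=> //; first exact: a_refl.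
  apply/allP => z z_bn; rewrite ltnNge; apply: contraL count_p => big.
  by rewrite -ltnNge -has_count; apply/hasP; exists z.
case: (boolP (has (fun z => M + size_pat p <= z) (bn p))) => [/hasP[x x_bn big_x]|small];
  last first.
  exists p, A; split=> //; first exact: a_refl.
  by apply/allP => z z_bn; rewrite ltnNge; apply: contra small => big; apply/hasP; exists z.
have [y y_M y_bn] : exists2 y, y \in iota M (size_pat p) & y \notin bn p.
  apply/hasP; apply/negPn/negP => /hasPn bn_full.
  have sub : {subset x :: iota M (size_pat p) <= bn p}.
    by move=> z; rewrite in_cons => /orP[/eqP -> //|/bn_full/negPn].
  have uniq_x : uniq (x :: iota M (size_pat p)).
    by rewrite /= iota_uniq mem_iota negb_and -leqNgt big_x orbT.
  by have := leq_trans (uniq_leq_size uniq_x sub) (size_bn p); rewrite /= size_iota ltnn.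
move: y_M; rewrite mem_iota => /andP[M_y y_p].
have x_fnp : x \notin fnp p.
  by apply: contraL big_x => x_p; rewrite -ltnNge ltn_addr // below // mem_cat x_p.
have y_fresh : y \notin fn (Case p A) by apply: contraL M_y => /below; rewrite ltnNge.
have aCase := a_case_ren x_bn x_fnp y_fresh.
have [|z z_fn|p' [A' [a' size_p' size_A' small]]] := IH (swap_pat x y p) (swap_proc x y A).
- rewrite size_pat_swap bn_swap -ltnS; apply: leq_trans count_p.
  rewrite -(count_swap (a := fun z => M + size_pat p <= z) big_x _ y_bn) -?ltnNge //.
  by rewrite -addn1 leq_add2l lt0n; apply: contraTneq x_bn => /count_memPn.
- by apply: below; rewrite (alpha_fn aCase).
exists p', A'; split; first exact: a_trans aCase a'.
- by rewrite size_p' size_pat_swap.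
- by rewrite size_A' size_proc_swap.
- by rewrite -(size_pat_swap x y).
Qed.

(* Each binder needs at most as many fresh names as the size of the construct that
   introduces it. *)
Lemma alpha_canon n Q M : size_proc Q <= n -> {in fn Q, forall z, z < M} ->
  exists2 Q', alpha Q Q' & names_below (M + size_proc Q) Q'.
Proof.
elim: n Q M => [|n IH] Q M size_Q below; first by have := size_proc_gt0 Q; lia.
case: Q size_Q below => [|A B|A|x A|p A] /= size_Q below.
- by exists Defs.Nil; first exact: a_refl.
- have [A' aA bA] := IH A M ltac:(lia) (fun z zA => below z ltac:(by rewrite mem_cat zA)).
  have [B' aB bB] := IH B M ltac:(lia) (fun z zB => below z ltac:(by rewrite mem_cat zB orbT)).
  exists (Par A' B'); first exact: a_par.
  by rewrite /= (names_below_mono _ bA) ?(names_below_mono _ bB) //; lia.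
- have [A' aA bA] := IH A M ltac:(lia) below.
  by exists (Rep A'); [exact: a_rep|rewrite /= (names_below_mono _ bA) //; lia].
- have M_fresh : M \notin fn (Res x A) by apply/negP => /below; rewrite ltnn.
  have below' : {in fn (swap_proc x M A), forall z, z < M + 1}.
    move=> z; rewrite fn_swap => /mapP[w wA ->].
    case: (eqVneq w x) => [->|w_x]; first by rewrite swap_namel addn1.
    have w_M : w < M by apply: below; rewrite /= mem_filter w_x.
    by rewrite swap_name_id ?(ltn_eqF w_M) //; lia.
  have [A' aA bA] := IH (swap_proc x M A) (M + 1) ltac:(rewrite size_proc_swap; lia) below'.
  exists (Res M A'); first exact: a_trans (a_res_ren M_fresh) (a_res _ aA).
  by rewrite /= (names_below_mono _ bA) ?andbT ?size_proc_swap; lia.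
- have [p' [A' [aCase size_p' size_A' small]]] := alpha_Case_canon (leqnn _) below.
  have below' : {in fn A', forall z, z < M + size_pat p}.
    move=> z zA; case: (boolP (z \in bn p')) => [/(allP small) //|z_bn].
    have : z \in fn (Case p' A') by rewrite /= mem_cat mem_filter z_bn zA orbT.
    by rewrite -(alpha_fn aCase) => /below; lia.
  have [A'' aA bA] := IH A' (M + size_pat p) ltac:(rewrite size_A'; lia) below'.
  exists (Case p' A''); first exact: a_trans aCase (a_case _ aA).
  rewrite /= (names_below_mono _ bA) ?andbT ?size_A'; last by lia.
  apply: names_below_patP => z; rewrite /pnames mem_cat => /orP[/(allP small)|z_p]; first lia.
  have : z \in fn (Case p' A') by rewrite /= mem_cat z_p.
  by rewrite -(alpha_fn aCase) => /below; lia.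
Qed.

Fixpoint enum_pat (n k : nat) : seq pat :=
  if n is n'.+1 then
    [seq PBind i | i <- iota 0 k] ++ [seq PVar i | i <- iota 0 k] ++
    [seq PProt i | i <- iota 0 k] ++ [seq PComp a b | a <- enum_pat n' k, b <- enum_pat n' k]
  else [::].

Lemma enum_patP n k p : size_pat p <= n -> names_below_pat k p -> p \in enum_pat n k.
Proof.
elim: n p => [|n IH] [x|x|x|a b] //= size_p below; rewrite !mem_cat.
- by rewrite map_f // mem_iota.
- by rewrite map_f ?orbT // mem_iota.
- by rewrite map_f ?orbT // mem_iota.
- by case/andP: below => ba bb; rewrite allpairs_f ?orbT // IH //; lia.
Qed.

Fixpoint enum_proc (n k : nat) : seq proc :=
  if n is n'.+1 then
    Defs.Nil :: [seq Par a b | a <- enum_proc n' k, b <- enum_proc n' k] ++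
    [seq Rep a | a <- enum_proc n' k] ++
    [seq Res x a | x <- iota 0 k, a <- enum_proc n' k] ++
    [seq Case p a | p <- enum_pat n' k, a <- enum_proc n' k]
  else [::].

Lemma enum_procP n k P : size_proc P <= n -> names_below k P -> P \in enum_proc n k.
Proof.
elim: n P => [|n IH] [|a b|a|x a|p a] //= size_P below; rewrite in_cons !mem_cat.
- by rewrite eqxx.
- by case/andP: below => ba bb; rewrite allpairs_f ?orbT // IH //; lia.
- by rewrite map_f ?orbT // IH //; lia.
- by case/andP: below => bx ba; rewrite allpairs_f ?orbT ?mem_iota // IH //; lia.
- case/andP: below => bp ba; rewrite allpairs_f ?orbT ?IH //; try lia.
  by rewrite enum_patP //; lia.
Qed.

Lemma alpha_enum_proc n M Q : size_proc Q <= n -> {in fn Q, forall z, z < M} ->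
  exists2 Q', Q' \in enum_proc n (M + n) & alpha Q Q'.
Proof.
move=> size_Q below; have [Q' aQ bQ'] := alpha_canon (leqnn _) below.
exists Q' => //; apply: enum_procP; first by rewrite -(alpha_size_proc aQ).
by apply: names_below_mono bQ'; rewrite leq_add2l.
Qed.

Lemma mem_In (T : eqType) (x : T) s : x \in s -> In x s.
Proof. by elim: s => //= y s IH; rewrite in_cons => /orP[/eqP ->|/IH]; [left|right]. Qed.

Theorem proposition3p7 :
  forall (P : proc) (mu : label), wf_proc P ->
  exists reps : list proc,
    forall P', trans P mu P' -> exists Q, In Q reps /\ scong P' Q.
Proof.
move=> P mu _; have [B bounded] := exists_derivatives_bound P.
have [M below] : exists M, {in fn P ++ label_names mu, forall z, z < M}.
  exists (\max_(z <- fn P ++ label_names mu) z).+1 => z z_in.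
  by rewrite ltnS; apply: leq_bigmax_seq.
exists (enum_proc B (M + B)) => P' t.
have [Q P'Q size_Q] := bounded_derivative_scong (bounded P erefl _ _ t).
have below_Q : {in fn Q, forall z, z < M}.
  by move=> z; rewrite -(scong_fn P'Q) => /(trans_fn t)/below.
have [Q' Q'_enum aQQ'] := alpha_enum_proc size_Q below_Q.
by exists Q'; split; [apply: mem_In|apply: s_trans P'Q (s_alpha aQQ')].
Qed.
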